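(* Let $p,q$ be positive integers and $\mathbf{C}=\begin{bmatrix}1 & p\\ q & 1+pq\end{bmatrix}$. For each positive integer $e$ let $T_e$ be the least period of the Cat map over $\mathbb{Z}_{2^e}$. Then there exists a positive integer $e_s$ such that $T_{e+l}=2^l\cdot T_e$ for every integer $e\ge e_s$ and every non-negative integer $l$.
   Context: For a positive integer $N$, the Cat map over $\mathbb{Z}_N$ is the map $\mathbb{Z}_N^2\to\mathbb{Z}_N^2$, $v\mapsto \mathbf{C}v \bmod N$. Its least period is the least positive integer $n$ such that $\mathbf{C}^n v\equiv v \pmod N$ for all $v\in\mathbb{Z}_N^2$. *)

From mathcomp Require Import all_boot all_order all_algebra.
Set Implicit Arguments. Unset Strict Implicit. Unset Printing Implicit Defensive.
Import GRing.Theory Num.Theory.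
Local Open Scope ring_scope.

Definition cat_mx (p q : nat) : 'M[int]_2 :=
  \matrix_(i < 2, j < 2)
    (if (i == 0%N :> nat) then (if (j == 0%N :> nat) then 1 else p%:Z)
     else (if (j == 0%N :> nat) then q%:Z else 1 + p%:Z * q%:Z)).

Definition cat_fixes (p q N n : nat) : Prop :=
  forall v : 'cV[int]_2, forall i : 'I_2,
    (((cat_mx p q ^+ n) *m v) i ord0 = v i ord0 %[mod N%:Z])%Z.

Definition cat_least_period (p q N n : nat) : Prop :=
  (0 < n)%N /\ cat_fixes p q N n /\
  forall m : nat, (0 < m)%N -> cat_fixes p q N m -> (n <= m)%N.

(* Modulo 4 the Cat matrix C has some least period T: by Cayley-Hamilton
   C^2 = t C - 1, which forces C^6 = 1 (mod 2) and hence C^12 = 1 (mod 4).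
   Since C^T <> 1, there is a largest k >= 2 with C^T = 1 + 2^k B, and then
   B is not divisible by 2.  Squaring 1 + 2^k B gives 1 + 2^(k+1) B' with
   B' = B (mod 2), while odd powers keep the exponent k; hence C^(T r) is 1
   modulo exactly 2^(k + v_2(r)).  Every period modulo 2^(k+j) is a multiple of T, so
   the least one is 2^j T, and the theorem holds with e_s = k. *)

From mathcomp Require Import all_boot all_order all_algebra ring zify.
Set Implicit Arguments. Unset Strict Implicit. Unset Printing Implicit Defensive.
Import GRing.Theory Num.Theory.
Local Open Scope ring_scope.

Section CongruenceToOne.

Variable n : nat.
Implicit Types (d x : int) (A B : 'M[int]_n.+1).

Definition eq1mx_mod d A : bool := [forall i, forall j, (d %| (A - 1) i j)%Z].

Lemma eq1mx_modP d A : reflect (exists B, A = 1 + d *: B) (eq1mx_mod d A).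
Proof.
apply: (iffP forallP) => [dvdA | [B ->] i].
  exists (\matrix_(i, j) (((A - 1) i j) %/ d)%Z).
  apply/matrixP => i j; move/forallP: (dvdA i) => /(_ j) /divzK.
  by rewrite !mxE mulrC => ->; rewrite addrC subrK.
by apply/forallP => j; rewrite [1 + _]addrC addrK mxE dvdz_mulr.
Qed.

Lemma eq1mx_mod1 d : eq1mx_mod d 1.
Proof. by apply/eq1mx_modP; exists 0; rewrite scaler0 addr0. Qed.

Lemma eq1mx_modM d A B :
  eq1mx_mod d A -> eq1mx_mod d B -> eq1mx_mod d (A * B).
Proof.
move=> /eq1mx_modP[X ->] /eq1mx_modP[Y ->]; apply/eq1mx_modP.
exists (X + Y + d *: (X * Y)).
rewrite mulrDl !mul1r mulrDr mulr1 -scalerAl -scalerAr scalerA !scalerDr scalerA.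
by rewrite -!addrA [d *: Y + _]addrCA.
Qed.

Lemma eq1mx_modX d A m : eq1mx_mod d A -> eq1mx_mod d (A ^+ m).
Proof.
move=> eqA; elim: m => [|m IHm]; first by rewrite expr0 eq1mx_mod1.
by rewrite exprS eq1mx_modM.
Qed.

Lemma eq1mx_mod_dvd d1 d2 A : (d1 %| d2)%Z -> eq1mx_mod d2 A -> eq1mx_mod d1 A.
Proof.
move=> /dvdzP[c ->] /eq1mx_modP[B ->]; apply/eq1mx_modP.
by exists (c *: B); rewrite scalerA mulrC.
Qed.

Lemma eq1mx_mod_mulKl d A B :
  eq1mx_mod d A -> eq1mx_mod d (A * B) -> eq1mx_mod d B.
Proof.
move=> /eq1mx_modP[X ->] /eq1mx_modP[Y eqAB]; apply/eq1mx_modP.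
exists (Y - X * B); move: eqAB; rewrite mulrDl mul1r -scalerAl.
by move/(congr1 (fun M => M - d *: (X * B))); rewrite addrK scalerBr addrA.
Qed.

Lemma sqr1D_even_scale x B :
  (1 + (2 * x) *: B) ^+ 2 = 1 + (4 * x) *: (B + x *: B ^+ 2).
Proof.
rewrite expr2 mulrDl mul1r mulrDr mulr1 -scalerAl -scalerAr scalerA scalerDr.
rewrite -expr2 (addrA _ ((2 * x) *: B)) -(addrA 1) -scalerDl scalerA addrA.
by congr (1 + _ *: _ + _ *: _); ring.
Qed.

Lemma eq1mx_mod_sqr x A : eq1mx_mod (2 * x) A -> eq1mx_mod (4 * x) (A ^+ 2).
Proof.
move=> /eq1mx_modP[B ->]; apply/eq1mx_modP.
by rewrite sqr1D_even_scale; eexists.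
Qed.

Lemma eq1mx_mod2_exp6 t A : A ^+ 2 = t *: A - 1 -> eq1mx_mod 2 (A ^+ 6).
Proof.
(* A^2 = 1 (mod 2) when t is even, A^3 = 1 (mod 2) when t is odd. *)
move=> sqrA; have [h [def_t|def_t]] : exists h, t = 2 * h \/ t = 2 * h + 1.
  by exists (t %/ 2)%Z; lia.
- rewrite (exprM _ 2 3); apply/eq1mx_modX/eq1mx_modP; exists (h *: A - 1).
  by rewrite sqrA def_t; apply/matrixP => i j; rewrite !mxE; ring.
- rewrite (exprM _ 3 2); apply/eq1mx_modX/eq1mx_modP.
  exists ((2 * h * h + 2 * h) *: A - (h + 1)%:M).
  rewrite exprS sqrA mulrBr mulr1 -scalerAr -expr2 sqrA def_t.
  by apply/matrixP => i j; rewrite !mxE; ring.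
Qed.

End CongruenceToOne.

Section TwoAdicLevel.

Variable n : nat.
Implicit Types (A : 'M[int]_n.+1).

Definition level2 k A := eq1mx_mod (2 ^+ k) A && ~~ eq1mx_mod (2 ^+ k.+1) A.

Lemma level2_leq k m A : level2 k A -> eq1mx_mod (2 ^+ m) A -> (m <= k)%N.
Proof.
move=> /andP[_ notAk1] eqAm; rewrite leqNgt; apply: contra notAk1 => lt_km.
exact: eq1mx_mod_dvd (dvdz_exp2l _ lt_km) eqAm.
Qed.

Lemma exists_level2 m A :
  A != 1 -> eq1mx_mod (2 ^+ m) A -> exists2 k, (m <= k)%N & level2 k A.
Proof.
move=> neqA1 eqAm.
have [i [j nz_ij]] : exists i j, (A - 1) i j != 0.
  case: (boolP [exists i, exists j, (A - 1) i j != 0]) => [|/existsPn all0].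
    by move=> /existsP[i /existsP[j nz_ij]]; exists i, j.
  case/eqP: neqA1; apply/eqP; rewrite -subr_eq0; apply/eqP/matrixP => i j.
  by move/existsPn: (all0 i) => /(_ j) /negbNE /eqP ->; rewrite mxE.
pose P k := eq1mx_mod (2 ^+ k) A.
have P_bounded k : P k -> (k <= absz ((A - 1)%R i j))%N.
  move=> /forallP /(_ i) /forallP /(_ j); rewrite dvdzE abszX => dvd_ij.
  apply/ltnW/(leq_trans (ltn_expl k (isT : (1 < 2)%N))).
  by apply: dvdn_leq dvd_ij; rewrite absz_gt0.
case: (ex_maxnP (ex_intro P m eqAm) P_bounded) => k Pk maxk.
exists k; first exact: maxk.
by apply/andP; split=> //; apply/negP => /maxk; rewrite ltnn.
Qed.

(* (1 + 2^(k+2) B)^2 = 1 + 2^(k+3) (B + 2^(k+1) B^2), and the bracket is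
   even only if B is. *)
Lemma level2_sqr k A : level2 k.+2 A -> level2 k.+3 (A ^+ 2).
Proof.
set x : int := 2 ^+ k.+1.
have def2x : 2 ^+ k.+2 = 2 * x by rewrite /x exprS.
have def4x : 2 ^+ k.+3 = 4 * x by rewrite /x !exprS; ring.
move=> /andP[eqA notA]; apply/andP; split.
  by rewrite def4x; apply: eq1mx_mod_sqr; rewrite -def2x.
apply: contra notA; move: eqA; rewrite def2x.
move=> /eq1mx_modP[B ->] /eq1mx_modP[Y].
have nz4x : 4 * x != 0 by rewrite mulf_neq0 ?expf_neq0.
rewrite sqr1D_even_scale (exprS _ k.+3) def4x [2 * _]mulrC.
rewrite -[(4 * x * 2) *: Y]scalerA => /addrI eqB.
have {}eqB := scalemx_inj nz4x eqB.
apply/eq1mx_modP; exists (Y - 2 ^+ k *: B ^+ 2).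
rewrite -[X in (2 * x) *: X](addrK (x *: B ^+ 2)) eqB !scalerBr !scalerA.
by congr (1 + (_ *: _ - _ *: _)); rewrite /x ?exprS; ring.
Qed.

Lemma level2_exp2 k j A : level2 k.+2 A -> level2 (k.+2 + j) (A ^+ (2 ^ j)).
Proof.
move=> lvA; elim: j => [|j IHj]; first by rewrite addn0 expr1.
rewrite addnS expnS mulnC exprM !addSn; apply: level2_sqr.
by rewrite -!addSn.
Qed.

Lemma level2_expOdd k u A : odd u -> level2 k.+1 A -> level2 k.+1 (A ^+ u).
Proof.
move=> odd_u /andP[eqA notA]; apply/andP; split; first exact: eq1mx_modX.
apply: contra notA => eqAu.
have eqA2 : eq1mx_mod (2 ^+ k.+2) (A ^+ 2).
  rewrite (_ : 2 ^+ k.+2 = 4 * 2 ^+ k); last by rewrite !exprS; ring.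
  by apply: eq1mx_mod_sqr; rewrite -exprS.
apply: eq1mx_mod_mulKl (eq1mx_modX u./2 eqA2) _.
rewrite -exprM -exprSr; have := odd_double_half u.
by rewrite odd_u add1n -mul2n => ->.
Qed.

Lemma level2_exp k r A :
  (0 < r)%N -> level2 k.+2 A -> level2 (k.+2 + logn 2 r) (A ^+ r).
Proof.
move=> r_gt0 lvA; have [u] := pfactor_coprime (isT : prime 2) r_gt0.
rewrite coprime2n => odd_u def_r.
rewrite {2}def_r mulnC exprM addSn; apply: level2_expOdd odd_u _.
by rewrite -addSn level2_exp2.
Qed.

End TwoAdicLevel.

Section LeastPeriod.

Variable n : nat.
Implicit Types (d : int) (A : 'M[int]_n.+1).

Definition least_period_mx d A T :=
  (0 < T)%N /\ eq1mx_mod d (A ^+ T) /\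
  forall m, (0 < m)%N -> eq1mx_mod d (A ^+ m) -> (T <= m)%N.

Lemma exists_least_period d A m :
  (0 < m)%N -> eq1mx_mod d (A ^+ m) -> exists T, least_period_mx d A T.
Proof.
move=> m_gt0 eqAm; have exP : exists m, (0 < m)%N && eq1mx_mod d (A ^+ m).
  by exists m; rewrite m_gt0.
case: (ex_minnP exP) => T /andP[T_gt0 eqAT] minT.
exists T; split=> //; split=> // k k_gt0 eqAk.
by apply: minT; rewrite k_gt0.
Qed.

Lemma least_period_dvd d A T m :
  least_period_mx d A T -> eq1mx_mod d (A ^+ m) -> (T %| m)%N.
Proof.
move=> [T_gt0 [eqAT minT]] eqAm.
rewrite /dvdn -leqn0 leqNgt; apply/negP => r_gt0.
have eqAr : eq1mx_mod d (A ^+ (m %% T)).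
  apply: eq1mx_mod_mulKl (eq1mx_modX (m %/ T) eqAT) _.
  by rewrite -exprM -exprD mulnC -divn_eq.
by have := minT _ r_gt0 eqAr; rewrite leqNgt ltn_pmod.
Qed.

Lemma least_period_lift k j A T :
  least_period_mx 4 A T -> level2 k.+2 (A ^+ T) ->
  least_period_mx (2 ^+ (k.+2 + j)) A (2 ^ j * T).
Proof.
move=> perT lvAT; have [T_gt0 _] := perT.
split; first by rewrite muln_gt0 expn_gt0 T_gt0.
split; first by rewrite mulnC exprM; case/andP: (level2_exp2 j lvAT).
move=> m m_gt0 eqAm.
have eqAm4 : eq1mx_mod 4 (A ^+ m).
  by apply: eq1mx_mod_dvd eqAm; rewrite (_ : 4 = 2 ^+ 2) // dvdz_exp2l.
have /dvdnP[r def_m] := least_period_dvd perT eqAm4.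
have r_gt0 : (0 < r)%N by move: m_gt0; rewrite def_m muln_gt0 => /andP[].
have := level2_exp r_gt0 lvAT; rewrite -exprM mulnC -def_m => lvAm.
have := level2_leq lvAm eqAm; rewrite leq_add2l -pfactor_dvdn // => dvd_r.
by rewrite def_m leq_pmul2r // dvdn_leq.
Qed.

End LeastPeriod.

Lemma mulmx2E (R : pzRingType) (A B : 'M[R]_2) i j :
  (A * B) i j = A i 0 * B 0 j + A i 1 * B 1 j.
Proof.
rewrite -mulmxE mxE !big_ord_recl big_ord0 addr0.
by congr (_ + A i _ * B _ j); apply: val_inj.
Qed.

Section CatMap.

Variables p q : nat.
Local Notation C := (cat_mx p q).

Lemma cat_fixesP N m : cat_fixes p q N m <-> eq1mx_mod N%:Z (C ^+ m).
Proof.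
split=> [fixC | /eq1mx_modP[B eqC] v i].
  apply/forallP => i; apply/forallP => j; have := fixC (delta_mx j 0) i.
  by rewrite -colE !mxE andbT => /eqP; rewrite eqz_mod_dvd.
by rewrite eqC mulmxDl mul1mx -scalemxAl !mxE addrC mulrC modzMDl.
Qed.

Lemma cat_least_periodE N T :
  cat_least_period p q N T <-> least_period_mx N%:Z C T.
Proof.
rewrite /cat_least_period /least_period_mx cat_fixesP.
by split=> -[T_gt0 [fixT minT]]; do 2!split=> //;
  move=> m m_gt0 /cat_fixesP; apply: minT.
Qed.

Lemma cat_mx_sqr : C ^+ 2 = (2 + p%:Z * q%:Z) *: C - 1.
Proof.
apply/matrixP => i j; rewrite expr2 mulmx2E !mxE.
by case: i => [[|[|i]] ?]; case: j => [[|[|j]] ?] //=; ring.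
Qed.

Lemma cat_mx_exp12 : eq1mx_mod 4 (C ^+ 12).
Proof.
rewrite (exprM _ 6 2) -[4]mulr1; apply: eq1mx_mod_sqr; rewrite mulr1.
exact: eq1mx_mod2_exp6 cat_mx_sqr.
Qed.

Lemma cat_mx_exp_row0 m :
  (0 < p)%N -> 1 <= (C ^+ m) 0 0 /\ m%:Z <= (C ^+ m) 0 1.
Proof.
move=> p_gt0; elim: m => [|m [ge1_00 gem_01]]; first by rewrite expr0 !mxE.
have step (a b : int) : 1 <= a -> m%:Z <= b ->
    1 <= a * 1 + b * q%:Z /\ m.+1%:Z <= a * p%:Z + b * (1 + p%:Z * q%:Z).
  have pq_ge0 : 0 <= p%:Z * q%:Z by [].
  by move=> *; split; nia.
by rewrite exprSr !mulmx2E !mxE; apply: step.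
Qed.

Lemma cat_mx_exp_neq1 m : (0 < p)%N -> (0 < m)%N -> C ^+ m != 1.
Proof.
move=> p_gt0 m_gt0; have [_ gem_01] := cat_mx_exp_row0 m p_gt0.
by apply/eqP => eqC1; move: gem_01; rewrite eqC1 mxE /=; lia.
Qed.

End CatMap.

Local Close Scope ring_scope.

Theorem theorem2 (p q : nat) (hp : (0 < p)%N) (hq : (0 < q)%N) :
  exists es : nat, (0 < es)%N /\
    forall e l : nat, (es <= e)%N ->
      exists T : nat,
        cat_least_period p q (2 ^ e) T /\
        cat_least_period p q (2 ^ (e + l)) (2 ^ l * T).
Proof.
have [T perT] := exists_least_period (isT : (0 < 12)%N) (cat_mx_exp12 p q).
have [k k_ge2 lvT] : exists2 k, (2 <= k)%N & level2 k (cat_mx p q ^+ T).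
  have [T_gt0 [eqT _]] := perT.
  apply: (exists_level2 (cat_mx_exp_neq1 q hp T_gt0)).
  by rewrite (_ : 2 ^+ 2 = 4 :> int)%R.
case: k k_ge2 lvT => [|[|k]] // _ lvT.
exists k.+2; split=> // e l le_ke; exists (2 ^ (e - k.+2) * T).
rewrite !cat_least_periodE -!natz !natrX.
split; first by have := least_period_lift (e - k.+2) perT lvT; rewrite subnKC.
have := least_period_lift (e - k.+2 + l) perT lvT.
by rewrite addnA subnKC // mulnA -expnD [l + _]addnC.
Qed.
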